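(* (1) For $s\in\{0,1,\dots,\lfloor\frac{k_0-2}{2}\rfloor\}$ with $s':=k_0-1-s\le p-2$, we have $G^{(s),\dagger}(w,t)=G^{(s'),\dagger}(w,t)$ in $\mathbb Z_p[w][[t]]$. (2) For $s\in\{k_0,\dots,\lfloor\frac{k_0-2+p-1}{2}\rfloor\}$ and $s'':=k_0-1-s+p-1$, we have $G^{(s),\dagger}(w,t)=G^{(s''),\dagger}(w,t)$ in $\mathbb Z_p[w][[t]]$.
   Context: Fix a prime $p\ge7$ and $k_0\in\{2,\dots,p\}$. $\{n\}$ is the residue of $n$ mod $p-1$ in $\{0,\dots,p-2\}$. $\mathcal K=\{k\ge2:k\equiv k_0\pmod{p-1}\}$, $k_\bullet=(k-k_0)/(p-1)$. For $s\in\{0,\dots,p-2\}$: $a_s=\{k_0-2-2s\}$, $\delta_s=\lfloor\frac{s+\{a_s+s\}}{p-1}\rfloor$; if $a_s+s<p-1$, $t_1^{(s)}=s+\delta_s$, $t_2^{(s)}=a_s+s+\delta_s+2$; otherwise $t_1^{(s)}=\{a_s+s\}+\delta_s+1$, $t_2^{(s)}=s+\delta_s+1$. For $k\in\mathcal K$: $d_k^{ur}(s)=\lfloor\frac{k_\bullet-t_1^{(s)}}{p+1}\rfloor+\lfloor\frac{k_\bullet-t_2^{(s)}}{p+1}\rfloor+2$, $d_k^{ur,\dagger}(s)=d_k^{ur}(s)+\delta_s$, $d_k^{Iw,\dagger}=2k_\bullet+2$. Set $m_n^{(s),\dagger}(k)=\min\{n-d_k^{ur,\dagger}(s),\,d_k^{Iw,\dagger}-d_k^{ur,\dagger}(s)-n\}$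 if $d_k^{ur,\dagger}(s)<n<d_k^{Iw,\dagger}-d_k^{ur,\dagger}(s)$, else $0$; $w_k=\exp((k-2)p)-1$; $g_n^{(s),\dagger}(w)=\prod_{k\in\mathcal K}(w-w_k)^{m_n^{(s),\dagger}(k)}$; $G^{(s),\dagger}(w,t)=\sum_{n\ge0}g_n^{(s),\dagger}(w)t^n$. *)

From mathcomp Require Import all_boot all_order all_algebra.
Set Implicit Arguments. Unset Strict Implicit. Unset Printing Implicit Defensive.
Import Order.TTheory GRing.Theory Num.Theory.
Local Open Scope ring_scope.

Definition resid (p : nat) (x : int) : int := (x %% (p.-1)%:Z)%Z.

Definition a_s (p k0 s : nat) : int := resid p (k0%:Z - 2 - 2 * s%:Z).

Definition delta_s (p k0 s : nat) : int :=
  ((s%:Z + resid p (a_s p k0 s + s%:Z)) %/ (p.-1)%:Z)%Z.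

Definition t1 (p k0 s : nat) : int :=
  if a_s p k0 s + s%:Z < (p.-1)%:Z then s%:Z + delta_s p k0 s
  else resid p (a_s p k0 s + s%:Z) + delta_s p k0 s + 1.

Definition t2 (p k0 s : nat) : int :=
  if a_s p k0 s + s%:Z < (p.-1)%:Z then a_s p k0 s + s%:Z + delta_s p k0 s + 2
  else s%:Z + delta_s p k0 s + 1.

(* For k in K we write k = k0 + (p-1) j, so that k_bullet = j (a natural number). *)
Definition d_ur (p k0 s j : nat) : int :=
  ((j%:Z - t1 p k0 s) %/ (p.+1)%:Z)%Z + ((j%:Z - t2 p k0 s) %/ (p.+1)%:Z)%Z + 2.

Definition d_ur_dag (p k0 s j : nat) : int := d_ur p k0 s j + delta_s p k0 s.

Definition d_Iw_dag (j : nat) : int := 2 * j%:Z + 2.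

Definition mult (p k0 s n j : nat) : nat :=
  if (d_ur_dag p k0 s j < n%:Z) && (n%:Z < d_Iw_dag j - d_ur_dag p k0 s j)
  then absz (Num.min (n%:Z - d_ur_dag p k0 s j) (d_Iw_dag j - d_ur_dag p k0 s j - n%:Z))
  else 0%N.

(* Only finitely many k have m_n(k) <> 0 (for s <= p-2); the product over K
   is taken over k_bullet < gbound p s n, which contains all of them. *)
Definition gbound (p s n : nat) : nat := ((p.+1) * n.+1 + 2 * p + 2 * s + 4)%N.

Definition g_n (R : comNzRingType) (w : nat -> R) (p k0 s n : nat) : {poly R} :=
  \prod_(j < gbound p s n)
     ('X - (w (k0 + p.-1 * j)%N)%:P) ^+ mult p k0 s n j.

(* G^{(s),dagger}(w,t) as its coefficient sequence in t *)
Definition G_dag (R : comNzRingType) (w : nat -> R) (p k0 s : nat) : nat -> {poly R} :=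
  fun n => g_n w p k0 s n.

From mathcomp Require Import zify.
Lemma mult_beyond_bound (p k0 s n j : nat) :
  (2 <= p)%N -> (gbound p s n <= j)%N -> mult p k0 s n j = 0%N.
Proof.
move=> p2 hj.
have hp1 : (0 < (p.-1)%:Z)%R by rewrite ltz_nat; lia.
have hpn : (p.-1)%:Z != 0 by rewrite gt_eqF.
have ha0 : 0 <= a_s p k0 s by rewrite /a_s /resid modz_ge0.
have ha1 : a_s p k0 s < (p.-1)%:Z by rewrite /a_s /resid ltz_pmod.
have hr0 : 0 <= resid p (a_s p k0 s + s%:Z) by rewrite /resid modz_ge0.
have hr1 : resid p (a_s p k0 s + s%:Z) < (p.-1)%:Z by rewrite /resid ltz_pmod.
have hd0 : 0 <= delta_s p k0 s by rewrite /delta_s divz_ge0 //; lia.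
have hd1 := lez_floor (s%:Z + resid p (a_s p k0 s + s%:Z)) hpn.
rewrite -/(delta_s p k0 s) in hd1.
have hd2 : delta_s p k0 s <= s%:Z + resid p (a_s p k0 s + s%:Z) by nia.
have ht1 : t1 p k0 s <= (2 * p + 2 * s)%N%:Z.
  rewrite /t1; case: ifP => _; lia.
have ht2 : t2 p k0 s <= (2 * p + 2 * s)%N%:Z.
  rewrite /t2; case: ifP => _; lia.
have hj' : ((p.+1) * n.+1 + 2 * p + 2 * s + 4 <= j)%N by [].
have f1 : n.+1%:Z <= ((j%:Z - t1 p k0 s) %/ (p.+1)%:Z)%Z.
  rewrite lez_divRL ?ltz_nat //; nia.
have f2 : n.+1%:Z <= ((j%:Z - t2 p k0 s) %/ (p.+1)%:Z)%Z.
  rewrite lez_divRL ?ltz_nat //; nia.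
rewrite /mult /d_ur_dag /d_ur; case: ifP => // /andP [h _]; lia.
Qed.

From mathcomp Require Import all_boot all_order all_algebra.
From mathcomp Require Import zify.
From Stdlib Require Import FunctionalExtensionality.
Set Implicit Arguments. Unset Strict Implicit. Unset Printing Implicit Defensive.
Import Order.TTheory GRing.Theory Num.Theory.
Local Open Scope ring_scope.

(* The series G^{(s),dagger} depends on s only through the dimensions
   d_k^{ur,dagger}(s), which in turn depend only on the triple
   (t_1^{(s)}, t_2^{(s)}, delta_s).  In both ranges of the theorem s and its
   partner have the same triple, except for the pair (0, k0-1), whose triples
   (0, k0, 0) and (k0, p+1, 1) give the same dimensions because raising t_2 by
   p+1 lowers one floor by exactly 1, which the extra delta = 1 compensates. *)

Lemma modz_of_eucl (q m r d : int) : 0 <= r < d -> m = q * d + r -> (m %% d)%Z = r.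
Proof. by move=> hr ->; rewrite modzMDl modz_small. Qed.

Lemma divz_of_eucl (q m r d : int) : 0 <= r < d -> m = q * d + r -> (m %/ d)%Z = q.
Proof.
move=> /andP[r_ge0 r_lt] ->; have d_gt0 : 0 < d by lia.
rewrite divzMDl ?gt_eqF // divz_small ?addr0 //.
by rewrite r_ge0 gez0_abs ?ltW.
Qed.

Section GeneratingSeries.

Variables (R : comNzRingType) (w : nat -> R) (p k0 : nat).
Hypothesis p_ge2 : (2 <= p)%N.

Lemma g_n_widen s n N : (gbound p s n <= N)%N ->
  g_n w p k0 s n = \prod_(j < N) ('X - (w (k0 + p.-1 * j)%N)%:P) ^+ mult p k0 s n j.
Proof.
move=> le_bound_N; rewrite /g_n -!(big_mkord xpredT
  (fun j => ('X - (w (k0 + p.-1 * j)%N)%:P) ^+ mult p k0 s n j)).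
rewrite (big_cat_nat (leq0n _) le_bound_N) /= [X in _ = _ * X]big_nat_cond.
by rewrite [X in _ = _ * X]big1 ?mulr1 // => j /andP[/andP[+ _] _] => /mult_beyond_bound ->.
Qed.

Lemma G_dag_eq_of_d_ur_dag s s' :
  d_ur_dag p k0 s =1 d_ur_dag p k0 s' -> G_dag w p k0 s = G_dag w p k0 s'.
Proof.
move=> eq_d; apply: functional_extensionality => n.
set N := maxn (gbound p s n) (gbound p s' n).
rewrite /G_dag (@g_n_widen s n N) ?leq_maxl // (@g_n_widen s' n N) ?leq_maxr //.
by apply: eq_bigr => j _; rewrite /mult eq_d.
Qed.

End GeneratingSeries.

Definition ur_params (p k0 s : nat) : int * int * int :=
  (t1 p k0 s, t2 p k0 s, delta_s p k0 s).

Definition ur_dim (p : nat) (T : int * int * int) (j : nat) : int :=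
  let: (T1, T2, D) := T in
  ((j%:Z - T1) %/ (p.+1)%:Z)%Z + ((j%:Z - T2) %/ (p.+1)%:Z)%Z + 2 + D.

Lemma d_ur_dagE p k0 s j : d_ur_dag p k0 s j = ur_dim p (ur_params p k0 s) j.
Proof. by []. Qed.

Lemma ur_dimC p T1 T2 D j : ur_dim p (T1, T2, D) j = ur_dim p (T2, T1, D) j.
Proof. by rewrite /ur_dim [X in X + 2]addrC. Qed.

Lemma ur_dim_shift p T1 T2 D j :
  ur_dim p (T1, T2 + (p.+1)%:Z, D + 1) j = ur_dim p (T1, T2, D) j.
Proof.
rewrite /ur_dim; have -> : j%:Z - (T2 + (p.+1)%:Z) = (-1) * (p.+1)%:Z + (j%:Z - T2) by lia.
by rewrite divzMDl //; lia.
Qed.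

Section UrParams.

Variables p k0 : nat.
Hypotheses (p_ge2 : (2 <= p)%N) (k0_range : (2 <= k0 <= p)%N).

Lemma ur_params_low s : (2 * s <= k0 - 2)%N ->
  ur_params p k0 s = (s%:Z, k0%:Z - s%:Z, 0).
Proof.
move=> hs.
have ha : a_s p k0 s = k0%:Z - 2 - 2 * s%:Z by apply: (@modz_of_eucl 0); lia.
have hr : resid p (a_s p k0 s + s%:Z) = k0%:Z - 2 - s%:Z.
  by rewrite ha; apply: (@modz_of_eucl 0); lia.
have hd : delta_s p k0 s = 0 by rewrite /delta_s hr; apply: (@divz_of_eucl _ _ (k0%:Z - 2)); lia.
by rewrite /ur_params /t1 /t2 hr hd ha; case: ifP => cond; congr (_, _, _); lia.
Qed.

Lemma ur_params_low_dual s : (2 * s <= k0 - 2)%N -> (1 <= s)%N ->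
  ur_params p k0 (k0 - 1 - s) = (s%:Z, k0%:Z - s%:Z, 0).
Proof.
move=> hs s_gt0; set s' := (k0 - 1 - s)%N.
have ha : a_s p k0 s' = 2 * s%:Z - k0%:Z + (p.-1)%:Z by apply: (@modz_of_eucl (-1)); lia.
have hr : resid p (a_s p k0 s' + s'%:Z) = s%:Z - 1.
  by rewrite ha; apply: (@modz_of_eucl 1); lia.
have hd : delta_s p k0 s' = 0 by rewrite /delta_s hr; apply: (@divz_of_eucl _ _ (k0%:Z - 2)); lia.
by rewrite /ur_params /t1 /t2 hr hd ha; case: ifP => cond; congr (_, _, _); lia.
Qed.

Lemma ur_params_top : (k0 < p)%N ->
  ur_params p k0 (k0 - 1) = (k0%:Z, (p.+1)%:Z, 1).
Proof.
move=> k0_lt_p; set s' := (k0 - 1)%N.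
have ha : a_s p k0 s' = (p.-1)%:Z - k0%:Z by apply: (@modz_of_eucl (-1)); lia.
have hr : resid p (a_s p k0 s' + s'%:Z) = (p.-1)%:Z - 1.
  by rewrite ha; apply: (@modz_of_eucl 0); lia.
have hd : delta_s p k0 s' = 1 by rewrite /delta_s hr; apply: (@divz_of_eucl _ _ (k0%:Z - 2)); lia.
by rewrite /ur_params /t1 /t2 hr hd ha; case: ifP => cond; congr (_, _, _); lia.
Qed.

Lemma ur_params_high s : (k0 <= s)%N -> (2 * s <= k0 - 2 + (p - 1))%N ->
  ur_params p k0 s = (s%:Z + 1, k0%:Z + p%:Z - s%:Z, 1).
Proof.
move=> hs1 hs2.
have ha : a_s p k0 s = k0%:Z - 2 - 2 * s%:Z + (p.-1)%:Z by apply: (@modz_of_eucl (-1)); lia.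
have hr : resid p (a_s p k0 s + s%:Z) = k0%:Z - 2 - s%:Z + (p.-1)%:Z.
  by rewrite ha; apply: (@modz_of_eucl 0); lia.
have hd : delta_s p k0 s = 1 by rewrite /delta_s hr; apply: (@divz_of_eucl _ _ (k0%:Z - 2)); lia.
by rewrite /ur_params /t1 /t2 hr hd ha; case: ifP => cond; congr (_, _, _); lia.
Qed.

Lemma ur_params_high_dual s : (k0 <= s)%N -> (2 * s <= k0 - 2 + (p - 1))%N ->
  ur_params p k0 (k0 + (p - 1) - 1 - s) = (s%:Z + 1, k0%:Z + p%:Z - s%:Z, 1).
Proof.
move=> hs1 hs2; set s' := (k0 + (p - 1) - 1 - s)%N.
have ha : a_s p k0 s' = 2 * s%:Z - k0%:Z by apply: (@modz_of_eucl (-2)); lia.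
have hr : resid p (a_s p k0 s' + s'%:Z) = s%:Z - 1.
  by rewrite ha; apply: (@modz_of_eucl 1); lia.
have hd : delta_s p k0 s' = 1 by rewrite /delta_s hr; apply: (@divz_of_eucl _ _ (k0%:Z - 2)); lia.
by rewrite /ur_params /t1 /t2 hr hd ha; case: ifP => cond; congr (_, _, _); lia.
Qed.

End UrParams.

Theorem mainTheorem6 (R : comNzRingType) (w : nat -> R) (p k0 : nat) :
  prime p -> (7 <= p)%N -> (2 <= k0 <= p)%N ->
  (forall s : nat, (s <= (k0 - 2)./2)%N -> (k0 - 1 - s <= p - 2)%N ->
     G_dag w p k0 s = G_dag w p k0 (k0 - 1 - s)) /\
  (forall s : nat, (k0 <= s <= (k0 - 2 + (p - 1))./2)%N ->
     G_dag w p k0 s = G_dag w p k0 (k0 + (p - 1) - 1 - s)).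
Proof.
move=> _ p_ge7 k0_range; have p_ge2 : (2 <= p)%N by lia.
split=> s.
- rewrite geq_half_double -mul2n => hs hs'.
  apply: (G_dag_eq_of_d_ur_dag _ p_ge2) => j; rewrite !d_ur_dagE ur_params_low //.
  have [s0 | s_gt0] := posnP s; last by rewrite ur_params_low_dual.
  rewrite {}s0 subn0 in hs' *; rewrite subr0 (ur_params_top p_ge2 k0_range); last lia.
  by rewrite ur_dimC -(ur_dim_shift p k0 0 0) !add0r.
- move=> /andP[hs1]; rewrite geq_half_double -mul2n => hs2.
  apply: (G_dag_eq_of_d_ur_dag _ p_ge2) => j.
  by rewrite !d_ur_dagE (ur_params_high p_ge2 k0_range hs1 hs2) (ur_params_high_dual p_ge2 k0_range hs1 hs2).
Qed.
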